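(* Let $m,n\ge1$. For every instance $(Q,c,d)$ of BQAP1, the set $\mathcal{G}_1=\{(x,y)\text{ feasible for BQAP1}: f_1(x,y)\ge \mathcal{A}_1(Q,c,d)\}$ satisfies $|\mathcal{G}_1|\ge n^{m-1}m^{n-1}$. For every instance $(Q,c,d)$ of BQAP2, the set $\mathcal{G}_2=\{(x,y)\text{ feasible for BQAP2}: f_2(x,y)\ge \mathcal{A}_2(Q,c,d)\}$ satisfies $|\mathcal{G}_2|\ge m^{m-1}n^{n-1}$.
   Context: $M=\{1,\dots,m\}$, $N=\{1,\dots,n\}$. BQAP1: data $Q=(q_{ijk\ell})$ ($m\times n\times m\times n$ real array), real $m\times n$ matrices $c,d$; feasible solutions are pairs $(x,y)$ of $m\times n$ 0-1 matrices with $\sum_{j=1}^n x_{ij}=1$ for all $i\in M$ and $\sum_{i=1}^m y_{ij}=1$ for all $j\in N$; objective $f_1(x,y)=\sum_{i,k\in M}\sum_{j,\ell\in N} q_{ijk\ell}x_{ij}y_{k\ell}+\sum_{i\in M,j\in N}c_{ij}x_{ij}+\sum_{i\in M,j\in N}d_{ij}y_{ij}$. BQAP2: data $Q$ ($m\times m\times n\times n$ real array), real $m\times m$ matrix $c$, real $n\times n$ matrix $d$; feasible solutions are pairs $(x,y)$ with $x$ an $m\times m$ 0-1 matrix with $\sum_{j=1}^m x_{ij}=1$ for all $i\in M$ and $y$ an $n\times n$ 0-1 matrix with $\sum_{i=1}^n y_{ij}=1$ for all $j\in N$; objective $f_2(x,y)=\sum_{i,j\in M}\sum_{k,\ell\in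 N} q_{ijk\ell}x_{ij}y_{k\ell}+\sum_{i,j\in M}c_{ij}x_{ij}+\sum_{i,j\in N}d_{ij}y_{ij}$. $\mathcal{A}_1(Q,c,d)$ (resp. $\mathcal{A}_2(Q,c,d)$) denotes the arithmetic mean of $f_1$ (resp. $f_2$) over all feasible solutions of BQAP1 (resp. BQAP2). *)

From HB Require Import structures.
From mathcomp Require Import all_boot all_order all_algebra.
Set Implicit Arguments. Unset Strict Implicit. Unset Printing Implicit Defensive.
Import Order.TTheory GRing.Theory Num.Theory.
Local Open Scope ring_scope.

(* 0-1 entries are represented by booleans; b2R b is the real value 0 or 1. *)
Definition b2R (R : ringType) (b : bool) : R := (nat_of_bool b)%:R.

Definition feas1 (m n : nat) (p : 'M[bool]_(m, n) * 'M[bool]_(m, n)) : bool :=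
  [forall i : 'I_m, (\sum_(j < n) nat_of_bool (p.1 i j) == 1)%N] &&
  [forall j : 'I_n, (\sum_(i < m) nat_of_bool (p.2 i j) == 1)%N].

Definition f1 (R : ringType) (m n : nat) (Q : 'I_m -> 'I_n -> 'I_m -> 'I_n -> R)
  (c d : 'M[R]_(m, n)) (p : 'M[bool]_(m, n) * 'M[bool]_(m, n)) : R :=
  \sum_(i < m) \sum_(k < m) \sum_(j < n) \sum_(l < n)
      Q i j k l * b2R R (p.1 i j) * b2R R (p.2 k l)
  + \sum_(i < m) \sum_(j < n) c i j * b2R R (p.1 i j)
  + \sum_(i < m) \sum_(j < n) d i j * b2R R (p.2 i j).

Definition A1 (R : fieldType) (m n : nat) (Q : 'I_m -> 'I_n -> 'I_m -> 'I_n -> R)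
  (c d : 'M[R]_(m, n)) : R :=
  (\sum_(p | feas1 p) f1 Q c d p) / (#|[pred p | @feas1 m n p]|)%:R.

Definition G1 (R : realFieldType) (m n : nat) (Q : 'I_m -> 'I_n -> 'I_m -> 'I_n -> R)
  (c d : 'M[R]_(m, n)) : {set 'M[bool]_(m, n) * 'M[bool]_(m, n)} :=
  [set p | feas1 p && (A1 Q c d <= f1 Q c d p)].

Definition feas2 (m n : nat) (p : 'M[bool]_m * 'M[bool]_n) : bool :=
  [forall i : 'I_m, (\sum_(j < m) nat_of_bool (p.1 i j) == 1)%N] &&
  [forall j : 'I_n, (\sum_(i < n) nat_of_bool (p.2 i j) == 1)%N].

Definition f2 (R : ringType) (m n : nat) (Q : 'I_m -> 'I_m -> 'I_n -> 'I_n -> R)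
  (c : 'M[R]_m) (d : 'M[R]_n) (p : 'M[bool]_m * 'M[bool]_n) : R :=
  \sum_(i < m) \sum_(j < m) \sum_(k < n) \sum_(l < n)
      Q i j k l * b2R R (p.1 i j) * b2R R (p.2 k l)
  + \sum_(i < m) \sum_(j < m) c i j * b2R R (p.1 i j)
  + \sum_(i < n) \sum_(j < n) d i j * b2R R (p.2 i j).

Definition A2 (R : fieldType) (m n : nat) (Q : 'I_m -> 'I_m -> 'I_n -> 'I_n -> R)
  (c : 'M[R]_m) (d : 'M[R]_n) : R :=
  (\sum_(p | feas2 p) f2 Q c d p) / (#|[pred p | @feas2 m n p]|)%:R.

Definition G2 (R : realFieldType) (m n : nat) (Q : 'I_m -> 'I_m -> 'I_n -> 'I_n -> R)
  (c : 'M[R]_m) (d : 'M[R]_n) : {set 'M[bool]_m * 'M[bool]_n} :=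
  [set p | feas2 p && (A2 Q c d <= f2 Q c d p)].

From HB Require Import structures.
From mathcomp Require Import all_boot all_order all_algebra.
Import Order.TTheory GRing.Theory Num.Theory.
Set Implicit Arguments. Unset Strict Implicit. Unset Printing Implicit Defensive.
Local Open Scope ring_scope.

(* Rotating the columns of x by a and the rows of y by b (a cyclic shift of
   each row of x and each column of y) preserves feasibility.  Since the shifts of x
   and y are independent and the objective is bilinear, averaging over the
   q r shifts replaces every entry of x by 1/q and every entry of y by 1/r,
   so every orbit has the same total objective value;
   hence the orbit average equals the global mean, and each orbit contains a
   solution at least as good as the mean.  Counting good solutions with
   multiplicity over all orbits gives #feasible <= q r #good, and the
   q^p r^s assignment-type solutions show #feasible >= q^p r^s. *)

Section Averaging.
Variables (R : realFieldType) (T I : finType) (P : pred T) (act : I -> T -> T).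
Variables (f : T -> R) (C : R).
Hypothesis I_gt0 : (0 < #|I|)%N.
Hypothesis act_inj : forall i, injective (act i).
Hypothesis act_pred : forall i x, P (act i x) = P x.
Hypothesis orbit_sum : forall x, P x -> \sum_i f (act i x) = C.

Let mean : R := (\sum_(x | P x) f x) / #|P|%:R.

Lemma big_act (V : Type) (idx : V) (op : Monoid.com_law idx) i (F : T -> V) :
  \big[op/idx]_(x | P x) F (act i x) = \big[op/idx]_(x | P x) F x.
Proof.
by rewrite [RHS](reindex_inj (@act_inj i)); apply: eq_bigl => x; rewrite act_pred.
Qed.

Lemma card_mul_sum : #|I|%:R * \sum_(x | P x) f x = #|P|%:R * C.
Proof.
rewrite !mulr_natl -!sumr_const.
transitivity (\sum_(i : I) \sum_(x | P x) f (act i x)).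
  by apply: eq_bigr => i _; rewrite big_act.
by rewrite exchange_big; apply: eq_bigr => x /orbit_sum.
Qed.

Lemma card_mul_mean x : P x -> #|I|%:R * mean = C.
Proof.
move=> Px; have P_gt0 : #|P|%:R != 0 :> R by rewrite pnatr_eq0 -lt0n; apply/card_gt0P; exists x.
by rewrite /mean mulrA card_mul_sum mulrAC divff // mul1r.
Qed.

Lemma exists_act_ge_mean x : P x -> exists i, mean <= f (act i x).
Proof.
move=> Px; apply/existsP; apply: contraT; rewrite negb_exists => /forallP below.
have : \sum_i f (act i x) < \sum_(i : I) mean.
  apply: ltr_sum => [|i _]; last by rewrite ltNge below.
  by case/card_gt0P: I_gt0 => i _; apply/hasP; exists i; rewrite ?mem_index_enum.
by rewrite orbit_sum // sumr_const -mulr_natl (card_mul_mean Px) ltxx.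
Qed.

Lemma card_le_mul_card_ge_mean : (#|P| <= #|I| * #|[set x | P x && (mean <= f x)%R]|)%N.
Proof.
set G := [set x | _].
have hit x : P x -> (0 < \sum_i (act i x \in G))%N.
  move=> Px; have [i ge_i] := exists_act_ge_mean Px.
  by rewrite (bigD1 i) //= inE act_pred Px ge_i.
rewrite -sum1_card -sum_nat_const.
apply: (@leq_trans (\sum_(x | P x) \sum_i (act i x \in G))); first exact: leq_sum.
rewrite exchange_big leq_sum // => i _.
rewrite (big_act _ i (fun x => nat_of_bool (x \in G))) -sum1_card big_mkcond [leqRHS]big_mkcond.
by apply: leq_sum => x _; case: (P x); case: (x \in G).
Qed.

End Averaging.

Lemma big_subl_index (V : finZmodType) (W : Type) (idx : W) (op : Monoid.com_law idx)
    (j : V) (F : V -> W) :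
  \big[op/idx]_a F (j - a) = \big[op/idx]_a F a.
Proof. by rewrite [RHS](reindex_inj (subrI j)). Qed.

Lemma big_subr_index (V : finZmodType) (W : Type) (idx : W) (op : Monoid.com_law idx)
    (j : V) (F : V -> W) :
  \big[op/idx]_a F (a - j) = \big[op/idx]_a F a.
Proof. by rewrite [RHS](reindex_inj (can_inj (addrNK j))). Qed.

Lemma exchange_big2 (V : nmodType) (I J K : finType) (F : I -> J -> K -> V) :
  \sum_a \sum_b \sum_k F a b k = \sum_k \sum_a \sum_b F a b k.
Proof. by under eq_bigr do rewrite exchange_big; rewrite exchange_big. Qed.

Lemma sum_b2R (R : nzRingType) (I : finType) (F : I -> bool) :
  \sum_i b2R R (F i) = (\sum_i nat_of_bool (F i))%:R.
Proof. by rewrite /b2R natr_sum. Qed.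

(* Both problems are instances of a pair (x, y) with x a p x q 0-1 matrix of
   unit row sums and y an r x s 0-1 matrix of unit column sums: BQAP1 is
   (p, q, r, s) = (m, n, m, n) and BQAP2 is (m, m, n, n). *)
Definition bqap_feasible (p q r s : nat) (P : 'M[bool]_(p, q) * 'M[bool]_(r, s)) : bool :=
  [forall i, (\sum_j nat_of_bool (P.1 i j) == 1)%N] &&
  [forall l, (\sum_k nat_of_bool (P.2 k l) == 1)%N].

Definition bqap_obj (R : nzRingType) (p q r s : nat) (Q : 'I_p -> 'I_q -> 'I_r -> 'I_s -> R)
    (c : 'M[R]_(p, q)) (d : 'M[R]_(r, s)) (P : 'M[bool]_(p, q) * 'M[bool]_(r, s)) : R :=
  \sum_i \sum_j \sum_k \sum_l Q i j k l * b2R R (P.1 i j) * b2R R (P.2 k l)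
  + \sum_i \sum_j c i j * b2R R (P.1 i j)
  + \sum_k \sum_l d k l * b2R R (P.2 k l).

Definition bqap_mean (R : fieldType) (p q r s : nat) (Q : 'I_p -> 'I_q -> 'I_r -> 'I_s -> R)
    (c : 'M[R]_(p, q)) (d : 'M[R]_(r, s)) : R :=
  (\sum_(P | bqap_feasible P) bqap_obj Q c d P)
    / #|[pred P : 'M[bool]_(p, q) * 'M[bool]_(r, s) | bqap_feasible P]|%:R.

Definition assignment_sol (p q r s : nat) (u : {ffun 'I_p -> 'I_q} * {ffun 'I_s -> 'I_r}) :
    'M[bool]_(p, q) * 'M[bool]_(r, s) :=
  (\matrix_(i, j) (u.1 i == j), \matrix_(k, l) (u.2 l == k)).

Lemma assignment_sol_inj p q r s : injective (@assignment_sol p q r s).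
Proof.
move=> [f g] [f' g'] [] /matrixP Ex /matrixP Ey; congr pair; apply/ffunP.
  by move=> i; have := Ex i (f i); rewrite !mxE eqxx => /esym/eqP.
by move=> l; have := Ey (g l) l; rewrite !mxE eqxx => /esym/eqP.
Qed.

Lemma assignment_sol_feasible p q r s u : bqap_feasible (@assignment_sol p q r s u).
Proof.
apply/andP; split; apply/forallP => i /=.
  rewrite (bigD1 (u.1 i)) //= mxE eqxx big1 // => j /negbTE ne_j.
  by rewrite mxE eq_sym ne_j.
rewrite (bigD1 (u.2 i)) //= mxE eqxx big1 // => k /negbTE ne_k.
by rewrite mxE eq_sym ne_k.
Qed.

Lemma card_bqap_feasible_ge p q r s :
  (q ^ p * r ^ s <= #|[pred P : 'M[bool]_(p, q) * 'M[bool]_(r, s) | bqap_feasible P]|)%N.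
Proof.
have <- : #|[set assignment_sol u | u in [set: {ffun 'I_p -> 'I_q} * {ffun 'I_s -> 'I_r}]]|
    = (q ^ p * r ^ s)%N.
  by rewrite card_imset ?cardsT ?card_prod ?card_ffun ?card_ord //; apply: assignment_sol_inj.
apply/subset_leq_card/subsetP => _ /imsetP[u _ ->].
by rewrite inE assignment_sol_feasible.
Qed.

Section CyclicShift.
Variables (p q' r' s : nat).
Local Notation q := q'.+1.
Local Notation r := r'.+1.
Local Notation sol := ('M[bool]_(p, q) * 'M[bool]_(r, s))%type.

Definition shift (a : 'I_q) (b : 'I_r) (P : sol) : sol :=
  (\matrix_(i, j) P.1 i (j - a), \matrix_(k, l) P.2 (k - b) l).

Lemma shift_inj a b : injective (shift a b).
Proof.
move=> [x y] [x' y'] [] /matrixP Ex /matrixP Ey; congr pair; apply/matrixP.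
  by move=> i j; have := Ex i (j + a); rewrite !mxE addrK.
by move=> k l; have := Ey (k + b) l; rewrite !mxE addrK.
Qed.

Lemma feasible_shift a b P : bqap_feasible (shift a b P) = bqap_feasible P.
Proof.
congr andb; apply: eq_forallb => i; congr (_ == _); under eq_bigr do rewrite mxE.
  exact: (big_subr_index _ _ (fun j => nat_of_bool (P.1 i j))).
exact: (big_subr_index _ _ (fun k => nat_of_bool (P.2 k i))).
Qed.

Variables (R : nzRingType) (Q : 'I_p -> 'I_q -> 'I_r -> 'I_s -> R).
Variables (c : 'M[R]_(p, q)) (d : 'M[R]_(r, s)).

Lemma sum_obj_shift P : bqap_feasible P ->
  \sum_a \sum_b bqap_obj Q c d (shift a b P) =
  \sum_i \sum_j \sum_k \sum_l Q i j k l
  + r%:R * \sum_i \sum_j c i j + q%:R * \sum_k \sum_l d k l.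
Proof.
case/andP => /forallP rows1 /forallP cols1.
have row_avg i j : \sum_a b2R R (P.1 i (j - a)) = 1.
  by rewrite (big_subl_index _ _ (fun a => b2R R (P.1 i a))) sum_b2R (eqP (rows1 i)).
have col_avg k l : \sum_b b2R R (P.2 (k - b) l) = 1.
  by rewrite (big_subl_index _ _ (fun b => b2R R (P.2 b l))) sum_b2R (eqP (cols1 l)).
under eq_bigr do rewrite !big_split /=.
rewrite !big_split /=; congr (_ + _ + _).
- rewrite exchange_big2; apply: eq_bigr => i _.
  rewrite exchange_big2; apply: eq_bigr => j _.
  rewrite exchange_big2; apply: eq_bigr => k _.
  rewrite exchange_big2; apply: eq_bigr => l _.
  transitivity (Q i j k l *
      ((\sum_a b2R R (P.1 i (j - a))) * \sum_b b2R R (P.2 (k - b) l)));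
    last by rewrite row_avg col_avg !mulr1.
  rewrite big_distrlr mulr_sumr; apply: eq_bigr => a _.
  by rewrite mulr_sumr; apply: eq_bigr => b _; rewrite !mxE mulrA.
- under eq_bigr do rewrite sumr_const card_ord.
  rewrite sumrMnl -[LHS]mulr_natl; congr (_ * _).
  rewrite exchange_big; apply: eq_bigr => i _; rewrite exchange_big; apply: eq_bigr => j _.
  by under eq_bigr do rewrite mxE; rewrite -mulr_sumr row_avg mulr1.
- rewrite sumr_const card_ord -[LHS]mulr_natl; congr (_ * _).
  rewrite exchange_big; apply: eq_bigr => k _; rewrite exchange_big; apply: eq_bigr => l _.
  by under eq_bigr do rewrite mxE; rewrite -mulr_sumr col_avg mulr1.
Qed.

End CyclicShift.

Lemma card_bqap_above_mean (R : realFieldType) (p q' r' s : nat)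
    (Q : 'I_p -> 'I_q'.+1 -> 'I_r'.+1 -> 'I_s -> R)
    (c : 'M[R]_(p, q'.+1)) (d : 'M[R]_(r'.+1, s)) :
  (q'.+1 ^ p * r'.+1 ^ s <= q'.+1 * r'.+1 *
     #|[set P | bqap_feasible P && (bqap_mean Q c d <= bqap_obj Q c d P)%R]|)%N.
Proof.
apply: leq_trans (card_bqap_feasible_ge _ _ _ _) _.
have -> : (q'.+1 * r'.+1)%N = #|{: 'I_q'.+1 * 'I_r'.+1}| by rewrite card_prod !card_ord.
apply: (card_le_mul_card_ge_mean (act := fun u => shift u.1 u.2)).
- by rewrite card_prod !card_ord.
- by move=> u; apply: shift_inj.
- by move=> u P; apply: feasible_shift.
- move=> P feasP; rewrite -(pair_bigA _ (fun a b => bqap_obj Q c d (shift a b P))).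
  exact: sum_obj_shift.
Qed.

Lemma f1_bqap_obj (R : nzRingType) (m n : nat) (Q : 'I_m -> 'I_n -> 'I_m -> 'I_n -> R)
    (c d : 'M[R]_(m, n)) :
  f1 Q c d =1 bqap_obj Q c d.
Proof. by move=> P; congr (_ + _ + _); apply: eq_bigr => i _; apply: exchange_big. Qed.

Lemma G1_bqap (R : realFieldType) (m n : nat) (Q : 'I_m -> 'I_n -> 'I_m -> 'I_n -> R)
    (c d : 'M[R]_(m, n)) :
  G1 Q c d = [set P | bqap_feasible P && (bqap_mean Q c d <= bqap_obj Q c d P)%R].
Proof.
have A1_mean : A1 Q c d = bqap_mean Q c d.
  by congr (_ / _); apply: eq_bigr => P _; apply: f1_bqap_obj.
by apply/setP => P; rewrite !inE A1_mean f1_bqap_obj.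
Qed.

Lemma G2_bqap (R : realFieldType) (m n : nat) (Q : 'I_m -> 'I_m -> 'I_n -> 'I_n -> R)
    (c : 'M[R]_m) (d : 'M[R]_n) :
  G2 Q c d = [set P | bqap_feasible P && (bqap_mean Q c d <= bqap_obj Q c d P)%R].
Proof. by []. Qed.

Theorem theorem2 (R : realFieldType) (m n : nat) (hm : (0 < m)%N) (hn : (0 < n)%N) :
  (forall (Q : 'I_m -> 'I_n -> 'I_m -> 'I_n -> R) (c d : 'M[R]_(m, n)),
      (n ^ m.-1 * m ^ n.-1 <= #|G1 Q c d|)%N) /\
  (forall (Q : 'I_m -> 'I_m -> 'I_n -> 'I_n -> R) (c : 'M[R]_m) (d : 'M[R]_n),
      (m ^ m.-1 * n ^ n.-1 <= #|G2 Q c d|)%N).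
Proof.
case: m hm => // m _; case: n hn => // n _; split => Q c d /=.
- rewrite -(@leq_pmul2l (n.+1 * m.+1)) // mulnACA -!expnS G1_bqap.
  exact: card_bqap_above_mean.
- rewrite -(@leq_pmul2l (m.+1 * n.+1)) // mulnACA -!expnS G2_bqap.
  exact: card_bqap_above_mean.
Qed.
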